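(* For a liner $X$ with $|X|>2$ the following are equivalent: (1) $X$ is Playfair; (2) $X$ is affine, $3$-regular and $3$-long; (3) for every line $L\subseteq X$ and point $x\in X\setminus L$ there exists a unique line $\Lambda$ such that $x\in\Lambda\subseteq\overline{L\cup\{x\}}\setminus L$.
   Context: A liner is a set $X$ of points with a family of subsets called lines such that any two distinct points lie in a unique line and every line contains at least two points. For distinct $x,y$, $\overline{xy}$ is the line through them and $\overline{xx}:=\{x\}$. A set is flat if it contains $\overline{xy}$ for all its distinct points; $\overline A$ is the smallest flat containing $A$; the rank $\|A\|$ is the smallest cardinality of $B\subseteq X$ with $A\subseteq\overline B$; a plane is a flat of rank 3. $X$ is Playfair if for every plane $P$, line $L\subseteq P$ and point $x\in P\setminus L$ there exists a unique line $\Lambda$ with $x\in\Lambda\subseteq P\setminus L$. $X$ is affine if for all $o,x,y\in X$ and $p\in\overline{xy}\setminus\overline{ox}$ there exists $u\in\overline{oy}$ such that for every $v\in\overline{oy}$: $u=v$ iff $\overline{vp}\cap\overline{ox}=\varnothing$. $X$ is $3$-regular if for every set $A\subseteq X$ with $|A|<3$ and points $o\in\overline A$, $p\in X\setminus\overline A$, we have $\overline{\{p\}\cup A}=\bigcup_{u\in\overline{op}}\bigcup_{a\in\overline A}\overline{ua}$. $X$ is $3$-long if every line has at least $3$ points. *)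

From Stdlib Require Import List.
Import ListNotations.

Set Implicit Arguments.

Section Liners.
Variable X : Type.
Variable IsLine : (X -> Prop) -> Prop.

Definition subset (A B : X -> Prop) : Prop := forall z, A z -> B z.
Definition seteq (A B : X -> Prop) : Prop := forall z, A z <-> B z.

Definition is_liner : Prop :=
  (forall x y, x <> y ->
     (exists L, IsLine L /\ L x /\ L y) /\
     (forall L L', IsLine L -> IsLine L' -> L x -> L y -> L' x -> L' y -> seteq L L'))
  /\ (forall L, IsLine L -> exists x y, x <> y /\ L x /\ L y).

(* the line through x and y (for x <> y), and {x} when x = y *)
Definition lineThrough (x y : X) : X -> Prop :=
  fun z => (x = y /\ z = x) \/ (x <> y /\ exists L, IsLine L /\ L x /\ L y /\ L z).

Definition flat (A : X -> Prop) : Prop :=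
  forall x y, A x -> A y -> x <> y -> subset (lineThrough x y) A.

Definition closure (A : X -> Prop) : X -> Prop :=
  fun z => forall F, flat F -> subset A F -> F z.

Definition of_list (l : list X) : X -> Prop := fun z => In z l.

Definition rank_le (A : X -> Prop) (n : nat) : Prop :=
  exists B : list X, length B <= n /\ subset A (closure (of_list B)).

Definition plane (P : X -> Prop) : Prop :=
  flat P /\ rank_le P 3 /\ ~ rank_le P 2.

Definition playfair : Prop :=
  forall P L x, plane P -> IsLine L -> subset L P -> P x -> ~ L x ->
    (exists Lam, IsLine Lam /\ Lam x /\ subset Lam (fun z => P z /\ ~ L z)) /\
    (forall Lam Lam', IsLine Lam -> Lam x -> subset Lam (fun z => P z /\ ~ L z) ->
                      IsLine Lam' -> Lam' x -> subset Lam' (fun z => P z /\ ~ L z) ->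
                      seteq Lam Lam').

Definition affine : Prop :=
  forall o x y p, lineThrough x y p -> ~ lineThrough o x p ->
    exists u, lineThrough o y u /\
      forall v, lineThrough o y v ->
        (u = v <-> ~ exists w, lineThrough v p w /\ lineThrough o x w).

Definition card_lt3 (A : X -> Prop) : Prop :=
  exists l : list X, length l <= 2 /\ seteq A (of_list l).

Definition regular3 : Prop :=
  forall (A : X -> Prop) o p, card_lt3 A -> closure A o -> ~ closure A p ->
    seteq (closure (fun z => z = p \/ A z))
          (fun z => exists u a, lineThrough o p u /\ closure A a /\ lineThrough u a z).

Definition long3 : Prop :=
  forall L, IsLine L -> exists a b c, a <> b /\ a <> c /\ b <> c /\ L a /\ L b /\ L c.

Definition parallel_property : Prop :=
  forall L x, IsLine L -> ~ L x ->
    let S := fun z => closure (fun w => L w \/ w = x) z /\ ~ L z in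
    (exists Lam, IsLine Lam /\ Lam x /\ subset Lam S) /\
    (forall Lam Lam', IsLine Lam -> Lam x -> subset Lam S ->
                      IsLine Lam' -> Lam' x -> subset Lam' S -> seteq Lam Lam').

End Liners.

Definition more_than_two (X : Type) : Prop :=
  exists a b c : X, a <> b /\ a <> c /\ b <> c.

(* The plane [span L x] spanned by a line and an outside point is a plane, so Playfair's axiom
   yields the parallel property. Conversely, under the parallel property every point of [span L x]
   off [L], and every line of [span L x] together with a point off it, spans the same plane. Hence
   the parallel to [o x] through [p] meets [o y] in exactly one point (affinity), every point of a
   plane lies on a line joining two given intersecting lines of it (regularity), and a two-point
   line [{a, b}] would make [{a, b, x}] a flat with no room for a parallel (3-longness). Finally,
   regularity makes a plane the flat spanned by any three of its non-collinear points; in the plane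
   [a b x] a third point of the line [b x] and affinity produce a parallel, and a second parallel
   would give, by regularity and affinity, two distinct points where only one is allowed. *)

From Stdlib Require Import List Classical FunctionalExtensionality PropExtensionality Lia.
Import ListNotations.

Section Liner.
Variable X : Type.
Variable IsLine : (X -> Prop) -> Prop.
Hypothesis liner : is_liner IsLine.

Local Notation LT := (lineThrough IsLine).
Local Notation cl := (closure IsLine).
Local Notation fl := (flat IsLine).

Lemma set_ext (A B : X -> Prop) : (forall z, A z <-> B z) -> A = B.
Proof.
  intro H; apply functional_extensionality; intro z.
  apply propositional_extensionality; apply H.
Qed.

Lemma line_exists {x y} : x <> y -> exists L, IsLine L /\ L x /\ L y.
Proof. intro H; exact (proj1 (proj1 liner x y H)). Qed.

Lemma line_unique {L L' x y} : IsLine L -> IsLine L' ->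
  L x -> L y -> L' x -> L' y -> x <> y -> L = L'.
Proof. intros HL HL' Lx Ly L'x L'y Hxy. apply set_ext, (proj2 (proj1 liner x y Hxy)); auto. Qed.

Lemma line_two_points {L} : IsLine L -> exists x y, x <> y /\ L x /\ L y.
Proof. apply (proj2 liner). Qed.

Lemma line_other_point {L} y : IsLine L -> exists t, L t /\ t <> y.
Proof.
  intro H. destruct (line_two_points H) as [a [b [Hab [Ha Hb]]]].
  destruct (classic (a = y)); [exists b; split; congruence | exists a; auto].
Qed.

Lemma lineThrough_line {L a b} : IsLine L -> L a -> L b -> a <> b -> LT a b = L.
Proof.
  intros HL Ha Hb Hab. apply set_ext; intro z; split.
  - intros [[E _]|[_ [K [HK [Ka [Kb Kz]]]]]]; [contradiction|].
    rewrite (line_unique HK HL Ka Kb Ha Hb Hab) in Kz. exact Kz.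
  - intro Hz. right. split; [exact Hab | exists L; auto].
Qed.

Lemma lineThrough_is_line {a b} : a <> b -> IsLine (LT a b).
Proof.
  intro H. destruct (line_exists H) as [L [HL [Ha Hb]]].
  rewrite (lineThrough_line HL Ha Hb H). exact HL.
Qed.

Lemma lineThrough_l a b : LT a b a.
Proof.
  destruct (classic (a = b)) as [E|N]; [left; auto|].
  right. split; [exact N|]. destruct (line_exists N) as [L [? [? ?]]]. exists L; auto.
Qed.

Lemma lineThrough_r a b : LT a b b.
Proof.
  destruct (classic (a = b)) as [E|N]; [left; auto|].
  right. split; [exact N|]. destruct (line_exists N) as [L [? [? ?]]]. exists L; auto.
Qed.

Lemma lineThrough_refl {a z} : LT a a z -> z = a.
Proof. intros [[_ E]|[E _]]; [exact E | congruence]. Qed.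

Lemma lineThrough_eq {a b c d} : a <> b -> LT a b c -> LT a b d -> c <> d -> LT c d = LT a b.
Proof. intros Hab Hc Hd Hcd. exact (lineThrough_line (lineThrough_is_line Hab) Hc Hd Hcd). Qed.

Lemma lineThrough_comm a b : LT a b = LT b a.
Proof.
  destruct (classic (a = b)) as [E|N]; [subst; reflexivity|].
  symmetry. apply lineThrough_eq; auto using lineThrough_l, lineThrough_r.
Qed.

Lemma lineThrough_exchange {a b c} : a <> c -> LT a b c -> LT a c b.
Proof.
  intros Hac H. destruct (classic (a = b)) as [E|N].
  - subst. apply lineThrough_refl in H. congruence.
  - rewrite (lineThrough_eq N (lineThrough_l a b) H Hac). apply lineThrough_r.
Qed.

Lemma lineThrough_flat a b : fl (LT a b).
Proof.
  intros x y Hx Hy Hxy z Hz. destruct (classic (a = b)) as [E|N].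
  - subst. apply lineThrough_refl in Hx; apply lineThrough_refl in Hy. congruence.
  - rewrite (lineThrough_eq N Hx Hy Hxy) in Hz. exact Hz.
Qed.

Lemma flat_lineThrough {F a b z} : fl F -> F a -> F b -> LT a b z -> F z.
Proof.
  intros HF Ha Hb Hz. destruct (classic (a = b)) as [E|N].
  - subst. apply lineThrough_refl in Hz. subst; exact Ha.
  - exact (HF a b Ha Hb N z Hz).
Qed.

Lemma line_flat {L} : IsLine L -> fl L.
Proof.
  intro H. destruct (line_two_points H) as [a [b [Hab [Ha Hb]]]].
  rewrite <- (lineThrough_line H Ha Hb Hab). apply lineThrough_flat.
Qed.

Lemma closure_flat {A} : fl (cl A).
Proof. intros x y Hx Hy Hxy z Hz F HF HA. exact (HF x y (Hx F HF HA) (Hy F HF HA) Hxy z Hz). Qed.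

Lemma closure_incl {A : X -> Prop} {z} : A z -> cl A z.
Proof. intros H F HF HA. auto. Qed.

Lemma closure_least {A F : X -> Prop} : fl F -> subset A F -> subset (cl A) F.
Proof. intros HF HA z Hz. apply Hz; auto. Qed.

Lemma closure_sub {A B : X -> Prop} {z} : (forall w, A w -> cl B w) -> cl A z -> cl B z.
Proof. intros H Hz. exact (closure_least closure_flat H z Hz). Qed.

Lemma closure_lineThrough {A a b z} : cl A a -> cl A b -> LT a b z -> cl A z.
Proof. exact (flat_lineThrough closure_flat). Qed.

Definition span (L : X -> Prop) x := cl (fun w => L w \/ w = x).

Lemma span_l {L} x z : L z -> span L x z.
Proof. intro; apply closure_incl; auto. Qed.

Lemma span_pt L x : span L x x.
Proof. apply closure_incl; auto. Qed.

Lemma span_least {L x F z} : fl F -> (forall w, L w -> F w) -> F x -> span L x z -> F z.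
Proof.
  intros HF HL Hx Hz. apply (closure_least HF (A := fun w => L w \/ w = x)); auto.
  intros w [Hw|Hw]; subst; auto.
Qed.

Lemma span_sub {L M x z} : (forall w, L w -> span M z w) -> span M z x ->
  subset (span L x) (span M z).
Proof. intros HL Hx w Hw. exact (span_least closure_flat HL Hx Hw). Qed.

Lemma closure_nil z : ~ cl (of_list []) z.
Proof. intro Hz. refine (closure_least (F := fun _ => False) _ _ z Hz); [intros u v []|intros w []]. Qed.

Lemma closure_single a : cl (of_list [a]) = LT a a.
Proof.
  apply set_ext; intro z; split; intro Hz.
  - refine (closure_least (lineThrough_flat a a) _ z Hz). intros w [E|[]]; subst; apply lineThrough_l.
  - apply lineThrough_refl in Hz; subst. apply closure_incl; simpl; auto.
Qed.

Lemma closure_pair a b : cl (of_list [a; b]) = LT a b.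
Proof.
  apply set_ext; intro z; split; intro Hz.
  - refine (closure_least (lineThrough_flat a b) _ z Hz).
    intros w [E|[E|[]]]; subst; [apply lineThrough_l|apply lineThrough_r].
  - refine (closure_lineThrough _ _ Hz); apply closure_incl; simpl; auto.
Qed.

Lemma closure_add_closure (A : X -> Prop) p :
  cl (fun z => z = p \/ A z) = cl (fun z => z = p \/ cl A z).
Proof.
  apply set_ext; intro z; split; apply closure_sub; intros w [E|Hw].
  - apply closure_incl; auto.
  - apply closure_incl; right; apply closure_incl; auto.
  - apply closure_incl; auto.
  - refine (closure_sub _ Hw). intros v Hv; apply closure_incl; auto.
Qed.

Lemma line_third_point (long : long3 IsLine) {L} a b : IsLine L -> exists c, L c /\ c <> a /\ c <> b.
Proof.
  intro HL. destruct (long L HL) as [c1 [c2 [c3 [H12 [H13 [H23 [L1 [L2 L3]]]]]]]].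
  destruct (classic (c1 = a \/ c1 = b)); [destruct (classic (c2 = a \/ c2 = b))|].
  - exists c3. split; [exact L3|]. split; intro; subst; intuition congruence.
  - exists c2. tauto.
  - exists c1. tauto.
Qed.

Lemma line_point_off_line (long : long3 IsLine) {L M} o : IsLine L -> IsLine M -> M <> L ->
  exists c, L c /\ c <> o /\ ~ M c.
Proof.
  intros HL HM HML.
  destruct (classic (exists m, M m /\ L m)) as [[m [Mm Lm]]|Hmiss].
  - destruct (line_third_point long o m HL) as [c [Lc [Hco Hcm]]].
    exists c. repeat split; auto. intro Mc. exact (HML (line_unique HM HL Mm Mc Lm Lc (not_eq_sym Hcm))).
  - destruct (line_other_point o HL) as [c [Lc Hco]]. exists c. repeat split; eauto.
Qed.

Section Parallel.
Hypothesis par : parallel_property IsLine.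

Definition parallel L x (Lam : X -> Prop) :=
  IsLine Lam /\ Lam x /\ forall z, Lam z -> span L x z /\ ~ L z.

Lemma parallel_exists {L x} : IsLine L -> ~ L x -> exists Lam, parallel L x Lam.
Proof. intros HL Hx. destruct (par L x HL Hx) as [[Lam [? [? ?]]] _]. exists Lam. split; auto. Qed.

Lemma parallel_unique {L x Lam Lam'} : IsLine L -> ~ L x ->
  parallel L x Lam -> parallel L x Lam' -> Lam = Lam'.
Proof.
  intros HL Hx [H1 [H2 H3]] [H1' [H2' H3']].
  apply set_ext, (proj2 (par L x HL Hx) Lam Lam'); auto.
Qed.

Lemma lineThrough_parallel {L x y} : x <> y -> span L x y ->
  ~ (exists w, L w /\ LT x y w) -> parallel L x (LT x y).
Proof.
  intros Hxy Hy Hmiss. split; [apply lineThrough_is_line; exact Hxy|].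
  split; [apply lineThrough_l|]. intros z Hz. split.
  - exact (closure_lineThrough (span_pt L x) Hy Hz).
  - intro Lz. apply Hmiss. exists z; auto.
Qed.

Lemma span_cases {L x Lam z} : IsLine L -> ~ L x -> parallel L x Lam ->
  span L x z -> z <> x -> Lam z \/ exists w, L w /\ LT x w z.
Proof.
  intros HL Hx Hpar Hz Hzx.
  destruct (classic (exists w, L w /\ LT x z w)) as [[w [Lw Hw]]|Hmiss].
  - right. exists w. split; [exact Lw|].
    assert (Hxw : x <> w) by (intro; subst; contradiction).
    rewrite (lineThrough_eq (not_eq_sym Hzx) (lineThrough_l x z) Hw Hxw). apply lineThrough_r.
  - left. rewrite <- (parallel_unique HL Hx (lineThrough_parallel (not_eq_sym Hzx) Hz Hmiss) Hpar).
    apply lineThrough_r.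
Qed.

Lemma span_eq_of_mem {L x y} : IsLine L -> ~ L x -> span L x y -> ~ L y -> span L y = span L x.
Proof.
  intros HL Hx Hy Hny.
  assert (Hyx : subset (span L y) (span L x)) by exact (span_sub (span_l x) Hy).
  enough (Hxy : span L y x).
  { apply set_ext; intro z; split; [apply Hyx | apply (span_sub (span_l y) Hxy)]. }
  destruct (classic (x = y)) as [E|Nxy]; [subst; apply span_pt|].
  destruct (parallel_exists HL Hny) as [Ly [HLy [Ly_y Ly_sub]]].
  destruct (line_other_point y HLy) as [t [Ht Hty]].
  destruct (Ly_sub t Ht) as [Ht_span Ht_L].
  destruct (classic (t = x)) as [E|Ntx]; [subst; exact Ht_span|].
  destruct (parallel_exists HL Hx) as [Lx HLx].
  (* a point [s] of [span L y] off [Lx] lies on a line through [x] meeting [L],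
     which drags [x] into [span L y] *)
  assert (Hdich : forall s, span L y s -> s <> x -> ~ L s -> Lx s \/ span L y x).
  { intros s Hs Hsx Hns.
    destruct (span_cases HL Hx HLx (Hyx s Hs) Hsx) as [Lx_s|[w [Lw Hw]]]; [left; exact Lx_s|right].
    assert (Hws : w <> s) by (intro; subst; contradiction).
    rewrite lineThrough_comm in Hw. apply lineThrough_exchange in Hw; [|exact Hws].
    exact (closure_lineThrough (span_l y _ Lw) Hs Hw). }
  destruct (Hdich y (span_pt L y) (not_eq_sym Nxy) Hny) as [Lx_y|]; [|assumption].
  destruct (Hdich t Ht_span Ntx Ht_L) as [Lx_t|]; [|assumption].
  destruct HLx as [HLx [Lx_x _]].
  rewrite (line_unique HLx HLy Lx_y Lx_t Ly_y Ht (not_eq_sym Hty)) in Lx_x.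
  exact (proj1 (Ly_sub x Lx_x)).
Qed.

Lemma span_eq_line_meeting {L x M w} : IsLine L -> ~ L x -> IsLine M ->
  (forall z, M z -> span L x z) -> M w -> L w -> exists z, ~ M z /\ span M z = span L x.
Proof.
  intros HL Hx HM HMsub Mw Lw.
  destruct (line_other_point w HM) as [m [Mm Hmw]].
  destruct (classic (L m)) as [Lm|NLm].
  { rewrite (line_unique HM HL Mw Mm Lw Lm (not_eq_sym Hmw)). exists x; auto. }
  destruct (line_other_point w HL) as [l [Ll Hlw]].
  assert (NMl : ~ M l).
  { intro Ml. apply NLm. rewrite <- (line_unique HM HL Mw Ml Lw Ll (not_eq_sym Hlw)). exact Mm. }
  exists l. split; [exact NMl|]. apply set_ext; intro z; split.
  - apply (span_sub HMsub (span_l x l Ll)).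
  - rewrite <- (span_eq_of_mem HL Hx (HMsub m Mm) NLm). apply span_sub.
    + intros v Hv. rewrite <- (lineThrough_line HL Lw Ll (not_eq_sym Hlw)) in Hv.
      exact (closure_lineThrough (span_l l _ Mw) (span_pt M l) Hv).
    + apply span_l; exact Mm.
Qed.

Lemma span_eq_line {L x M} : IsLine L -> ~ L x -> IsLine M ->
  (forall z, M z -> span L x z) -> exists z, ~ M z /\ span M z = span L x.
Proof.
  intros HL Hx HM HMsub.
  destruct (classic (exists w, M w /\ L w)) as [[w [Mw Lw]]|Hmiss].
  { exact (span_eq_line_meeting HL Hx HM HMsub Mw Lw). }
  destruct (line_two_points HM) as [m [m' [Hmm' [Mm Mm']]]].
  destruct (line_two_points HL) as [w [_ [_ [Lw _]]]].
  assert (Hmw : m <> w) by (intro; subst; apply Hmiss; eauto).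
  (* the line [m w] meets [L], which reduces to the previous case *)
  assert (HN := lineThrough_is_line Hmw).
  assert (HNsub : forall z, LT m w z -> span L x z)
    by (intros z Hz; exact (closure_lineThrough (HMsub m Mm) (span_l x _ Lw) Hz)).
  destruct (span_eq_line_meeting HL Hx HN HNsub (lineThrough_r m w) Lw) as [z [Nz Ez]].
  assert (NNm' : ~ LT m w m').
  { intro Hm'. apply Hmiss. exists w. split; [|exact Lw].
    rewrite (line_unique HM HN Mm Mm' (lineThrough_l m w) Hm' Hmm'). apply lineThrough_r. }
  assert (Em' : span (LT m w) m' = span L x).
  { rewrite <- Ez. apply span_eq_of_mem; auto. rewrite Ez. exact (HMsub m' Mm'). }
  exists w. split; [intro; apply Hmiss; eauto|]. apply set_ext; intro v; split.
  - apply (span_sub HMsub (span_l x _ Lw)).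
  - rewrite <- Em'. apply span_sub.
    + intros s Hs. exact (closure_lineThrough (span_l w _ Mm) (span_pt M w) Hs).
    + apply span_l; exact Mm'.
Qed.

Lemma span_line_eq {L x M y} : IsLine L -> ~ L x -> IsLine M ->
  (forall z, M z -> span L x z) -> span L x y -> ~ M y -> span M y = span L x.
Proof.
  intros HL Hx HM HMsub Hy Hny.
  destruct (span_eq_line HL Hx HM HMsub) as [z [Nz Ez]].
  rewrite <- Ez. apply span_eq_of_mem; auto. rewrite Ez; exact Hy.
Qed.

Section TwoPointLine.
Variables (L Lx : X -> Prop) (x k w w' : X).
Hypotheses (HL : IsLine L) (Hx : ~ L x) (HLx : parallel L x Lx) (Lx_k : Lx k) (Hkx : k <> x).
Hypotheses (Lw : L w) (L_two : forall z, L z -> z = w \/ z = w').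

Let k_span : span L x k := proj1 (proj2 (proj2 HLx) k Lx_k).
Let k_off : ~ L k := proj2 (proj2 (proj2 HLx) k Lx_k).
Let Hxw : x <> w := fun E => Hx (eq_ind_r L Lw E).

Lemma span_parallel_point : span L k = span L x.
Proof. exact (span_eq_of_mem HL Hx k_span k_off). Qed.

Lemma parallel_from_point : parallel L k Lx.
Proof.
  pose proof HLx as [H1 [_ H3]]. split; [exact H1|]. split; [exact Lx_k|].
  intros z Hz. rewrite span_parallel_point. exact (H3 z Hz).
Qed.

Lemma parallel_meets_xw {s} : Lx s -> LT x w s -> s = x.
Proof.
  intros Lx_s Hs. apply NNPP; intro Hsx. pose proof HLx as [H1 [Lx_x H3]].
  rewrite (line_unique H1 (lineThrough_is_line Hxw) Lx_x Lx_s (lineThrough_l x w) Hs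
             (not_eq_sym Hsx)) in H3.
  exact (proj2 (H3 w (lineThrough_r x w)) Lw).
Qed.

Let xw_sub : forall z, LT x w z -> span L x z :=
  fun z Hz => closure_lineThrough (span_pt L x) (span_l x _ Lw) Hz.
Let k_off_xw : ~ LT x w k := fun Hk => Hkx (parallel_meets_xw Lx_k Hk).

(* The parallel to [x w] through [k] can only be the line [k w']. *)
Lemma line_kw'_misses_xw {s} : LT k w' s -> ~ LT x w s.
Proof.
  intro Hs.
  assert (HM := lineThrough_is_line Hxw).
  destruct (parallel_exists HM k_off_xw) as [Q [HQ [Qk Qsub]]].
  destruct (line_other_point k HQ) as [q [Qq Hqk]].
  assert (Hq : span L k q).
  { rewrite span_parallel_point, <- (span_line_eq HL Hx HM xw_sub k_span k_off_xw).
    exact (proj1 (Qsub q Qq)). }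
  assert (Hkv : forall v, L v -> k <> v) by (intros v Lv E; subst; contradiction).
  destruct (span_cases HL k_off parallel_from_point Hq Hqk) as [Lx_q|[v [Lv Hv]]].
  - pose proof HLx as [H1 [Lx_x _]].
    rewrite (line_unique HQ H1 Qk Qq Lx_k Lx_q (not_eq_sym Hqk)) in Qsub.
    exfalso. exact (proj2 (Qsub x Lx_x) (lineThrough_l x w)).
  - assert (EQ := line_unique HQ (lineThrough_is_line (Hkv v Lv)) Qk Qq (lineThrough_l k v) Hv
                    (not_eq_sym Hqk)).
    destruct (L_two v Lv); subst v; rewrite EQ in Qsub.
    + exfalso. exact (proj2 (Qsub w (lineThrough_r k w)) (lineThrough_r x w)).
    + exact (proj2 (Qsub s Hs)).
Qed.

Lemma lineThrough_two_point {t} : LT x w t -> t = x \/ t = w.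
Proof.
  intro Ht. destruct (classic (t = x)) as [|Htx]; [left; assumption|].
  destruct (classic (t = w)) as [|Htw]; [right; assumption|]. exfalso.
  assert (Htk : t <> k) by (intro; subst; contradiction).
  assert (Ht_span : span L k t) by (rewrite span_parallel_point; exact (xw_sub t Ht)).
  destruct (span_cases HL k_off parallel_from_point Ht_span Htk) as [Lx_t|[v [Lv Hv]]].
  - exact (Htx (parallel_meets_xw Lx_t Ht)).
  - destruct (L_two v Lv); subst v.
    + apply k_off_xw. rewrite <- (lineThrough_eq Hxw (lineThrough_r x w) Ht (not_eq_sym Htw)).
      assert (Hkw : k <> w) by (intro; subst; contradiction).
      rewrite (lineThrough_eq Hkw (lineThrough_r k w) Hv (not_eq_sym Htw)). apply lineThrough_l.
    + exact (line_kw'_misses_xw Hv Ht).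
Qed.

End TwoPointLine.

(* A two-point line [L = {a, b}] would make [{a, b, x}] a flat,
   too small to hold the parallel through [x]. *)
Lemma two_point_line_absurd {L a b x} : IsLine L -> L a -> L b -> a <> b ->
  (forall z, L z -> z = a \/ z = b) -> ~ L x -> False.
Proof.
  intros HL La Lb Hab L_ab Hx.
  destruct (parallel_exists HL Hx) as [Lx HLx]. pose proof HLx as [HLx' [Lx_x Lx_sub]].
  destruct (line_other_point x HLx') as [k [Lx_k Hkx]]. destruct (Lx_sub k Lx_k) as [Hk Nk].
  assert (L_ba : forall z, L z -> z = b \/ z = a) by (intros z Hz; destruct (L_ab z Hz); auto).
  pose proof (fun t => @lineThrough_two_point L Lx x k a b HL Hx HLx Lx_k Hkx La L_ab t) as Hxa.
  pose proof (fun t => @lineThrough_two_point L Lx x k b a HL Hx HLx Lx_k Hkx Lb L_ba t) as Hxb.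
  set (F := fun z => z = a \/ z = b \/ z = x).
  assert (HF : fl F).
  { intros u v Hu Hv Huv z Hz. unfold F in *.
    assert (Hab_two : forall z, LT a b z -> z = a \/ z = b)
      by (rewrite (lineThrough_line HL La Lb Hab); exact L_ab).
    destruct Hu as [?|[?|?]]; destruct Hv as [?|[?|?]]; subst; try congruence;
      (idtac + rewrite lineThrough_comm in Hz);
      first [ destruct (Hab_two z Hz) | destruct (Hxa z Hz) | destruct (Hxb z Hz) ]; tauto. }
  assert (Fk : F k).
  { refine (span_least HF _ _ Hk); unfold F; [intros w Hw; destruct (L_ab w Hw)|]; auto. }
  destruct Fk as [?|[?|?]]; subst; contradiction.
Qed.

Lemma long3_of_parallel : more_than_two X -> long3 IsLine.
Proof.
  intros [p [q [r [Hpq [Hpr Hqr]]]]] L HL.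
  destruct (line_two_points HL) as [a [b [Hab [La Lb]]]].
  destruct (classic (exists c, L c /\ c <> a /\ c <> b)) as [[c [Lc [Hca Hcb]]]|Hn].
  { exists a, b, c. repeat split; auto. }
  assert (L_ab : forall z, L z -> z = a \/ z = b).
  { intros z Hz. apply NNPP; intro. apply Hn. exists z. tauto. }
  exfalso.
  assert (Hon : forall z, L z) by (intro z; apply NNPP; exact (two_point_line_absurd HL La Lb Hab L_ab)).
  destruct (L_ab p (Hon p)), (L_ab q (Hon q)), (L_ab r (Hon r)); subst; congruence.
Qed.

Section Long.
Hypothesis long : long3 IsLine.

Lemma span_transversal {L o p z} : IsLine L -> L o -> ~ L p -> span L p z ->
  exists u a, LT o p u /\ L a /\ LT u a z.
Proof.
  intros HL Lo Hp Hz.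
  destruct (classic (L z)) as [Lz|NLz].
  { exists o, z. repeat split; auto using lineThrough_l, lineThrough_r. }
  destruct (classic (LT o p z)) as [Kz|NKz].
  { exists z, o. repeat split; auto using lineThrough_l. }
  assert (Hop : o <> p) by (intro; subst; contradiction).
  assert (HK : IsLine (LT o p)) by (apply lineThrough_is_line; exact Hop).
  assert (HKsub : forall s, LT o p s -> span L p s)
    by (intros s Hs; exact (closure_lineThrough (span_l p _ Lo) (span_pt L p) Hs)).
  assert (Espan := span_line_eq HL Hp HK HKsub Hz NKz).
  destruct (parallel_exists HK NKz) as [Lz HLz]. pose proof HLz as [HLz' [Lz_z _]].
  assert (HLzL : Lz <> L) by (intro E; rewrite E in Lz_z; contradiction).
  destruct (line_point_off_line long o HL HLz' HLzL) as [a [La [Hao NLz_a]]].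
  assert (Hza : z <> a) by (intro; subst; contradiction).
  destruct (classic (exists u, LT o p u /\ LT z a u)) as [[u [Ku Hu]]|Hmiss].
  - exists u, a. repeat split; auto.
    assert (Hua : u <> a).
    { intro; subst u. apply Hp. rewrite <- (line_unique HK HL (lineThrough_l o p) Ku Lo La
                                              (not_eq_sym Hao)). apply lineThrough_r. }
    rewrite (lineThrough_eq Hza Hu (lineThrough_r z a) Hua). apply lineThrough_l.
  - exfalso. apply NLz_a.
    assert (Ha : span (LT o p) z a) by (rewrite Espan; exact (span_l p _ La)).
    rewrite <- (parallel_unique HK NKz (lineThrough_parallel Hza Ha Hmiss) HLz).
    apply lineThrough_r.
Qed.

Lemma lineThrough_transversal {a b o p z} : LT a b o -> ~ LT a b p ->
  cl (fun w => w = p \/ LT a b w) z -> exists u c, LT o p u /\ LT a b c /\ LT u c z.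
Proof.
  intros Ho Hp Hz. destruct (classic (a = b)) as [E|Hab].
  - subst b. apply lineThrough_refl in Ho; subst o.
    exists z, a. repeat split; [|apply lineThrough_l|apply lineThrough_l].
    refine (closure_least (lineThrough_flat a p) _ z Hz).
    intros w [E|Hw]; [subst; apply lineThrough_r|].
    apply lineThrough_refl in Hw; subst; apply lineThrough_l.
  - apply (span_transversal (lineThrough_is_line Hab) Ho Hp).
    refine (closure_sub _ Hz). intros w [E|Hw]; apply closure_incl; auto.
Qed.

Lemma regular3_of_parallel : regular3 IsLine.
Proof.
  intros A o p [l [Hlen HA]] Ho Hp z.
  replace A with (of_list l) in * by (symmetry; apply set_ext; exact HA).
  split.
  - intro Hz. rewrite closure_add_closure in Hz.
    destruct l as [|a [|b [|c l']]]; simpl in Hlen; try lia.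
    + exfalso; exact (closure_nil o Ho).
    + rewrite closure_single in Ho, Hp, Hz |- *. exact (lineThrough_transversal Ho Hp Hz).
    + rewrite closure_pair in Ho, Hp, Hz |- *. exact (lineThrough_transversal Ho Hp Hz).
  - intros [u [a [Hu [Ha Hz]]]].
    assert (Hsub : forall w, cl (of_list l) w -> cl (fun z => z = p \/ of_list l z) w)
      by (intros w Hw; refine (closure_sub _ Hw); intros v Hv; apply closure_incl; auto).
    assert (Hpp : cl (fun z => z = p \/ of_list l z) p) by (apply closure_incl; auto).
    exact (closure_lineThrough (closure_lineThrough (Hsub o Ho) Hpp Hu) (Hsub a Ha) Hz).
Qed.

End Long.

(* Otherwise [o y] and [M] would be two parallels to [Lp] through [o]. *)
Lemma parallel_meets_line {M p Lp o y} : IsLine M -> ~ M p -> parallel M p Lp ->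
  M o -> o <> y -> span M p y -> ~ M y -> exists u, LT o y u /\ Lp u.
Proof.
  intros HM Hp HLp Mo Hoy Hy NMy. pose proof HLp as [HLp' [Lp_p Lp_sub]].
  apply NNPP; intro Hmiss.
  assert (NLp_o : ~ Lp o) by (intro Ho; exact (proj2 (Lp_sub o Ho) Mo)).
  assert (Espan := span_line_eq HM Hp HLp' (fun s Hs => proj1 (Lp_sub s Hs)) (span_l p _ Mo) NLp_o).
  assert (Hpar_oy : parallel Lp o (LT o y))
    by (apply lineThrough_parallel; [exact Hoy|rewrite Espan; exact Hy|
        intros [w [Lp_w Hw]]; apply Hmiss; exists w; auto]).
  assert (Hpar_M : parallel Lp o M).
  { split; [exact HM|]. split; [exact Mo|]. intros s Ms. split.
    - rewrite Espan. exact (span_l p _ Ms).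
    - intro Lp_s. exact (proj2 (Lp_sub s Lp_s) Ms). }
  apply NMy. rewrite <- (parallel_unique HLp' NLp_o Hpar_oy Hpar_M). apply lineThrough_r.
Qed.

Definition affine_at o x y p :=
  exists u, LT o y u /\ forall v, LT o y v -> (u = v <-> ~ exists w, LT v p w /\ LT o x w).

(* When [o = x] the "line" [o x] is the point [o], which every line through [p]
   and a point [v <> p] of [o y] hits. *)
Lemma affine_at_point {o y p} : LT o y p -> p <> o -> affine_at o o y p.
Proof.
  intros Hp Hpo. exists p. split; [exact Hp|]. intros v Hv. split.
  - intros E [w [Hw1 Hw2]]; subst v.
    apply lineThrough_refl in Hw1; apply lineThrough_refl in Hw2; subst. contradiction.
  - intro Hmiss. apply NNPP; intro Hpv. apply Hmiss. exists o. split; [|apply lineThrough_l].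
    assert (Hoy : o <> y) by (intro; subst; apply lineThrough_refl in Hp; contradiction).
    rewrite (lineThrough_eq Hoy Hv Hp (not_eq_sym Hpv)). apply lineThrough_l.
Qed.

(* The required point is where the parallel to [o x] through [p] crosses [o y]. *)
Lemma affine_at_line {o x y p} : o <> x -> x <> y -> LT x y p -> ~ LT o x p -> affine_at o x y p.
Proof.
  intros Hox Hxy Hp Hnp. set (M := LT o x).
  assert (HM : IsLine M) by (apply lineThrough_is_line; exact Hox).
  assert (Hxp : x <> p) by (intro; subst; apply Hnp, lineThrough_r).
  assert (Hoy : o <> y) by (intro; subst y; apply Hnp; rewrite lineThrough_comm; exact Hp).
  assert (NMy : ~ M y).
  { intro My. apply Hnp. rewrite <- (lineThrough_eq Hox (lineThrough_r o x) My Hxy). exact Hp. }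
  assert (Hy : span M p y).
  { apply lineThrough_exchange in Hp; [|exact Hxp].
    exact (closure_lineThrough (span_l p _ (lineThrough_r o x)) (span_pt M p) Hp). }
  assert (Hoy_sub : forall s, LT o y s -> span M p s)
    by (intros s Hs; exact (closure_lineThrough (span_l p _ (lineThrough_l o x)) Hy Hs)).
  destruct (parallel_exists HM Hnp) as [Lp HLp]. pose proof HLp as [HLp' [Lp_p Lp_sub]].
  destruct (parallel_meets_line HM Hnp HLp (lineThrough_l o x) Hoy Hy NMy) as [u [Hu Lp_u]].
  assert (Hmeet : forall v, LT o y v -> Lp v -> v = u).
  { intros v Hv Lp_v. apply NNPP; intro Hvu.
    rewrite <- (line_unique (lineThrough_is_line Hoy) HLp' Hv Hu Lp_v Lp_u Hvu) in Lp_sub.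
    exact (proj2 (Lp_sub o (lineThrough_l o y)) (lineThrough_l o x)). }
  exists u. split; [exact Hu|]. intros v Hv. split.
  - intros E [w [Hw1 Hw2]]; subst v.
    exact (proj2 (Lp_sub w (flat_lineThrough (line_flat HLp') Lp_u Lp_p Hw1)) Hw2).
  - intro Hmiss. symmetry. apply Hmeet; [exact Hv|].
    destruct (classic (v = p)) as [E|Hvp]; [subst; exact Lp_p|].
    assert (Hmiss' : ~ exists w, M w /\ LT p v w)
      by (intros [w [Mw Hw]]; apply Hmiss; exists w; rewrite lineThrough_comm; auto).
    rewrite <- (parallel_unique HM Hnp
                  (lineThrough_parallel (not_eq_sym Hvp) (Hoy_sub v Hv) Hmiss') HLp).
    apply lineThrough_r.
Qed.

Lemma affine_of_parallel : affine IsLine.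
Proof.
  intros o x y p Hp Hnp.
  destruct (classic (x = y)) as [E|Hxy].
  { subst y. apply lineThrough_refl in Hp; subst p. exfalso; apply Hnp, lineThrough_r. }
  destruct (classic (o = x)) as [E|Hox].
  - subst x. apply (affine_at_point Hp). intro; subst; apply Hnp, lineThrough_l.
  - exact (affine_at_line Hox Hxy Hp Hnp).
Qed.

End Parallel.

Lemma closure_small_in_line (e : X) B : length B <= 2 -> exists c d, subset (cl (of_list B)) (LT c d).
Proof.
  destruct B as [|a [|b [|c B']]]; simpl; intros Hlen; try lia.
  - exists e, e. intros z Hz. exfalso; exact (closure_nil z Hz).
  - exists a, a. rewrite closure_single. intros z Hz; exact Hz.
  - exists a, b. rewrite closure_pair. intros z Hz; exact Hz.
Qed.

Lemma span_plane {L x} : IsLine L -> ~ L x -> plane IsLine (span L x).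
Proof.
  intros HL Hx. destruct (line_two_points HL) as [a [b [Hab [La Lb]]]].
  split; [apply closure_flat|]. split.
  - exists [a; b; x]. split; [simpl; lia|]. intros z Hz. refine (span_least closure_flat _ _ Hz).
    + intros w Hw. rewrite <- (lineThrough_line HL La Lb Hab) in Hw.
      refine (closure_lineThrough _ _ Hw); apply closure_incl; simpl; auto.
    + apply closure_incl; simpl; auto.
  - intros [B [Hlen Hsub]]. destruct (closure_small_in_line x B Hlen) as [c [d Hcd]].
    assert (Ha := Hcd a (Hsub a (span_l x a La))).
    assert (Hb := Hcd b (Hsub b (span_l x b Lb))).
    assert (Hx' := Hcd x (Hsub x (span_pt L x))).
    assert (Hcd' : c <> d)
      by (intro; subst; apply lineThrough_refl in Ha; apply lineThrough_refl in Hb; congruence).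
    apply Hx. rewrite <- (lineThrough_line HL La Lb Hab), (lineThrough_eq Hcd' Ha Hb Hab). exact Hx'.
Qed.

Lemma parallel_of_playfair : playfair IsLine -> parallel_property IsLine.
Proof.
  intros Hpf L x HL Hx. exact (Hpf (span L x) L x (span_plane HL Hx) HL (span_l x) (span_pt L x) Hx).
Qed.

Definition cl3 a b c := cl (of_list [a; b; c]).
Definition noncollinear a b c := a <> b /\ ~ LT a b c.

Lemma cl3_l a b c : cl3 a b c a.
Proof. apply closure_incl; simpl; auto. Qed.
Lemma cl3_m a b c : cl3 a b c b.
Proof. apply closure_incl; simpl; auto. Qed.
Lemma cl3_r a b c : cl3 a b c c.
Proof. apply closure_incl; simpl; auto. Qed.

Lemma cl3_swap12 a b c : cl3 a b c = cl3 b a c.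
Proof. unfold cl3. f_equal. apply set_ext; intro z; simpl; tauto. Qed.
Lemma cl3_swap23 a b c : cl3 a b c = cl3 a c b.
Proof. unfold cl3. f_equal. apply set_ext; intro z; simpl; tauto. Qed.

Lemma cl3_least {F a b c} : fl F -> F a -> F b -> F c -> subset (cl3 a b c) F.
Proof. intros HF Ha Hb Hc. apply (closure_least HF). intros w [E|[E|[E|[]]]]; subst; auto. Qed.

Lemma noncollinear_swap12 {a b c} : noncollinear a b c -> noncollinear b a c.
Proof. intros [H1 H2]. split; [auto|]. rewrite lineThrough_comm; exact H2. Qed.

Lemma noncollinear_swap23 {a b c} : noncollinear a b c -> noncollinear a c b.
Proof.
  intros [H1 H2]. assert (Hac : a <> c) by (intro; subst; apply H2, lineThrough_l).
  split; [exact Hac|]. intro Hc. apply H2, lineThrough_exchange; auto.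
Qed.

Lemma noncollinear_meet {a b c z} : noncollinear a b c -> LT a b z -> LT a c z -> z = a.
Proof.
  intros Hn Hb Hc. apply NNPP; intro Hza.
  destruct (noncollinear_swap23 Hn) as [Hac _]. destruct Hn as [Hab Hn]. apply Hn.
  rewrite <- (lineThrough_eq Hab (lineThrough_l a b) Hb (not_eq_sym Hza)).
  rewrite (lineThrough_eq Hac (lineThrough_l a c) Hc (not_eq_sym Hza)). apply lineThrough_r.
Qed.

Section Regular.
Hypothesis reg : regular3 IsLine.

Lemma cl3_transversal {d1 d2 p q} : d1 <> d2 -> ~ LT d1 d2 p -> cl3 d1 d2 p q ->
  exists u c, LT d1 p u /\ LT d1 d2 c /\ LT u c q.
Proof.
  intros H12 Hp Hq.
  assert (Hcard : card_lt3 (of_list [d1; d2])) by (exists [d1; d2]; split; [simpl; lia | intro; tauto]).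
  assert (Ho : cl (of_list [d1; d2]) d1) by (rewrite closure_pair; apply lineThrough_l).
  assert (Hnp : ~ cl (of_list [d1; d2]) p) by (rewrite closure_pair; exact Hp).
  destruct (proj1 (reg (of_list [d1; d2]) d1 p Hcard Ho Hnp q)) as [u [c [Hu [Hc Hz]]]].
  { refine (closure_sub _ Hq). intros w [E|[E|[E|[]]]]; subst; apply closure_incl; simpl; auto. }
  rewrite closure_pair in Hc. exists u, c. auto.
Qed.

Lemma cl3_exchange {d1 d2 p q} : d1 <> d2 -> ~ LT d1 d2 p -> cl3 d1 d2 p q -> ~ LT d1 d2 q ->
  cl3 d1 d2 q = cl3 d1 d2 p.
Proof.
  intros H12 Hp Hq Hnq.
  enough (Hpq : cl3 d1 d2 q p).
  { apply set_ext; intro z; split; intro Hz;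
      refine (cl3_least closure_flat _ _ _ z Hz);
      first [exact Hq | exact Hpq | apply cl3_l | apply cl3_m]. }
  destruct (cl3_transversal H12 Hp Hq) as [u [c [Hu [Hc Hz]]]].
  assert (Hline : forall w, LT d1 d2 w -> cl3 d1 d2 q w)
    by (intros w Hw; exact (closure_lineThrough (cl3_l d1 d2 q) (cl3_m d1 d2 q) Hw)).
  assert (Nu : ~ LT d1 d2 u)
    by (intro Hu'; exact (Hnq (flat_lineThrough (lineThrough_flat d1 d2) Hu' Hc Hz))).
  assert (Hcq : c <> q) by (intro; subst; contradiction).
  assert (Hu_in : cl3 d1 d2 q u).
  { rewrite lineThrough_comm in Hz. apply lineThrough_exchange in Hz; [|exact Hcq].
    exact (closure_lineThrough (Hline c Hc) (cl3_r d1 d2 q) Hz). }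
  assert (Hd1u : d1 <> u) by (intro; subst; apply Nu, lineThrough_l).
  apply lineThrough_exchange in Hu; [|exact Hd1u].
  exact (closure_lineThrough (cl3_l d1 d2 q) Hu_in Hu).
Qed.

Lemma cl3_exchange_point {d1 d2 d3 q} : noncollinear d1 d2 d3 -> cl3 d1 d2 d3 q -> q <> d1 ->
  exists e, cl3 d1 d2 d3 = cl3 q d1 e /\ noncollinear q d1 e.
Proof.
  intros Hn Hq Hqd.
  destruct (classic (LT d1 d2 q)) as [Hl|Hl].
  - assert (Hl' : ~ LT d1 d3 q) by (intro Hc; exact (Hqd (noncollinear_meet Hn Hl Hc))).
    destruct (noncollinear_swap23 Hn) as [H13 H132].
    rewrite cl3_swap23 in Hq |- *. rewrite <- (cl3_exchange H13 H132 Hq Hl').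
    exists d3. split.
    + rewrite cl3_swap23, cl3_swap12, cl3_swap23; reflexivity.
    + apply noncollinear_swap12, noncollinear_swap23. split; auto.
  - destruct Hn as [H12 H123]. rewrite <- (cl3_exchange H12 H123 Hq Hl).
    exists d2. split.
    + rewrite cl3_swap23, cl3_swap12, cl3_swap23; reflexivity.
    + apply noncollinear_swap12, noncollinear_swap23. split; auto.
Qed.

Lemma cl3_eq_of_noncollinear {b1 b2 b3 c1 c2 c3} : noncollinear b1 b2 b3 ->
  cl3 b1 b2 b3 c1 -> cl3 b1 b2 b3 c2 -> cl3 b1 b2 b3 c3 -> noncollinear c1 c2 c3 ->
  cl3 c1 c2 c3 = cl3 b1 b2 b3.
Proof.
  intros Hb H1 H2 H3 [Hc12 Hc3].
  assert (Step1 : exists e2 e3, cl3 b1 b2 b3 = cl3 c1 e2 e3 /\ noncollinear c1 e2 e3).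
  { destruct (classic (c1 = b1)) as [E|N]; [subst; exists b2, b3; auto|].
    destruct (cl3_exchange_point Hb H1 N) as [e [E1 E2]]. exists b1, e. auto. }
  destruct Step1 as [e2 [e3 [E1 Hn1]]]. rewrite E1 in H2, H3 |- *.
  destruct (cl3_exchange_point Hn1 H2 (not_eq_sym Hc12)) as [e [E2 [H21 H21e]]].
  rewrite E2 in H3 |- *.
  assert (Hc3' : ~ LT c2 c1 c3) by (rewrite lineThrough_comm; exact Hc3).
  rewrite <- (cl3_exchange H21 H21e H3 Hc3'). apply cl3_swap12.
Qed.

Lemma plane_eq_cl3 {P a b c} : plane IsLine P -> P a -> P b -> P c -> noncollinear a b c ->
  P = cl3 a b c.
Proof.
  intros [HPf [[B [HB HPB]] HP2]] Pa Pb Pc Hn.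
  apply set_ext; intro z; split; [|apply cl3_least; auto].
  destruct B as [|b1 [|b2 [|b3 [|b4 B']]]]; simpl in HB; try lia;
    try (exfalso; apply HP2; eexists; split; [|exact HPB]; simpl; lia).
  destruct (classic (noncollinear b1 b2 b3)) as [Hb|Hb].
  - rewrite (cl3_eq_of_noncollinear Hb (HPB a Pa) (HPB b Pb) (HPB c Pc) Hn). apply HPB.
  - exfalso. apply HP2. destruct (classic (b1 = b2)) as [E|N].
    + subst. exists [b2; b3]. split; [simpl; lia|]. intros w Hw. refine (closure_sub _ (HPB w Hw)).
      intros v [E|[E|[E|[]]]]; subst; apply closure_incl; simpl; auto.
    + exists [b1; b2]. split; [simpl; lia|]. intros w Hw. refine (closure_sub _ (HPB w Hw)).
      intros v [E|[E|[E|[]]]]; subst; try (apply closure_incl; simpl; auto; fail).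
      rewrite closure_pair. apply NNPP; intro; apply Hb; split; auto.
Qed.

Section Affine.
Hypotheses (aff : affine IsLine) (long : long3 IsLine).

Lemma affine_point_unique {o x y p u s} : LT x y p -> ~ LT o x p -> LT o y u -> LT o y s ->
  ~ (exists w, LT u p w /\ LT o x w) -> ~ (exists w, LT s p w /\ LT o x w) -> u = s.
Proof.
  intros Hp Hnp Hu Hs Hmu Hms. destruct (aff o x y p Hp Hnp) as [c [_ Hc]].
  rewrite <- (proj2 (Hc u Hu) Hmu). exact (proj2 (Hc s Hs) Hms).
Qed.

Section TwoParallels.
Variables (L L0 L1 : X -> Prop) (a b x : X).
Hypotheses (HL : IsLine L) (La : L a) (Lb : L b) (Hab : a <> b) (Hx : ~ L x).
Hypotheses (HL0 : IsLine L0) (L0_x : L0 x) (L0_sub : forall z, L0 z -> cl3 a b x z /\ ~ L z).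
Hypotheses (HL1 : IsLine L1) (L1_x : L1 x) (L1_sub : forall z, L1 z -> cl3 a b x z /\ ~ L z).

Let abx : noncollinear a b x.
Proof. split; [exact Hab|]. rewrite (lineThrough_line HL La Lb Hab). exact Hx. Qed.

Lemma parallels_meet_line_once {u s v t} : L1 u -> L0 s -> L v -> v <> a ->
  LT a t u -> LT a t s -> LT v t x -> u = s.
Proof.
  intros L1_u L0_s Lv Hva Hu Hs Hx_vt.
  assert (EL : LT a v = L) by exact (lineThrough_line HL La Lv (not_eq_sym Hva)).
  assert (Hmiss : forall L' z, IsLine L' -> L' x -> L' z -> (forall w, L' w -> ~ L w) ->
                    ~ exists w, LT z x w /\ LT a v w).
  { intros L' z HL' L'x L'z Hoff [w [Hw Lw]]. rewrite EL in Lw.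
    exact (Hoff w (flat_lineThrough (line_flat HL') L'z L'x Hw) Lw). }
  refine (affine_point_unique Hx_vt _ Hu Hs _ _).
  - rewrite EL. exact Hx.
  - exact (Hmiss L1 u HL1 L1_x L1_u (fun w Hw => proj2 (L1_sub w Hw))).
  - exact (Hmiss L0 s HL0 L0_x L0_s (fun w Hw => proj2 (L0_sub w Hw))).
Qed.

(* Regularity in the plane [a u b] puts [x] on a line [v t] with [v] on [L] and [t] on [u s];
   affinity then leaves room for only one point of [u s] whose line to [x] misses [L]. *)
Lemma parallels_transversal_absurd {u s} : L1 u -> L0 s -> LT u s a -> False.
Proof.
  intros L1_u L0_s Ha.
  assert (Hu_L : ~ L u) by exact (proj2 (L1_sub u L1_u)).
  assert (Hus : u <> s) by (intro; subst; apply lineThrough_refl in Ha; subst; contradiction).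
  assert (Hux : u <> x).
  { intro; subst u. rewrite (lineThrough_line HL0 L0_x L0_s Hus) in Ha. exact (proj2 (L0_sub a Ha) La). }
  assert (HT : IsLine (LT u s)) by (apply lineThrough_is_line; exact Hus).
  assert (NTx : ~ LT u s x).
  { intro Tx. rewrite (line_unique HT HL1 (lineThrough_l u s) Tx L1_u L1_x Hux) in Ha.
    exact (proj2 (L1_sub a Ha) La). }
  assert (Hau : a <> u) by (intro; subst; contradiction).
  assert (ET : LT a u = LT u s) by exact (lineThrough_line HT Ha (lineThrough_l u s) Hau).
  assert (aub : noncollinear a u b).
  { split; [exact Hau|]. rewrite ET. intro Tb. apply Hu_L.
    rewrite <- (line_unique HT HL Ha Tb La Lb Hab). apply lineThrough_l. }
  assert (Eplane : cl3 a u b = cl3 a b x).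
  { apply (cl3_eq_of_noncollinear abx);
      [apply cl3_l|exact (proj1 (L1_sub u L1_u))|apply cl3_m|exact aub]. }
  assert (Hx_in : cl3 a u b x) by (rewrite Eplane; apply cl3_r).
  destruct (cl3_transversal Hau (proj2 aub) Hx_in) as [v [t [Hv [Ht Hx_vt]]]].
  rewrite (lineThrough_line HL La Lb Hab) in Hv. rewrite ET in Ht.
  assert (Hta : t <> a).
  { intro; subst t. exact (Hx (flat_lineThrough (line_flat HL) Hv La Hx_vt)). }
  assert (Hva : v <> a).
  { intro; subst v. exact (NTx (flat_lineThrough (line_flat HT) Ha Ht Hx_vt)). }
  assert (Eat : LT a t = LT u s) by exact (lineThrough_line HT Ha Ht (not_eq_sym Hta)).
  apply Hus. refine (parallels_meet_line_once L1_u L0_s Hv Hva _ _ Hx_vt); rewrite Eat;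
    [apply lineThrough_l|apply lineThrough_r].
Qed.

Lemma parallels_in_plane_sub : subset L1 L0.
Proof.
  intros z1 L1_z1. apply NNPP; intro N0.
  assert (Hz1x : x <> z1) by (intro; subst; contradiction).
  destruct (line_other_point x HL0) as [z0 [L0_z0 Hz0x]].
  assert (E0 : LT x z0 = L0) by exact (lineThrough_line HL0 L0_x L0_z0 (not_eq_sym Hz0x)).
  assert (E1 : LT x z1 = L1) by exact (lineThrough_line HL1 L1_x L1_z1 Hz1x).
  assert (Hz1 : ~ LT x z0 z1) by (rewrite E0; exact N0).
  assert (Eplane : cl3 x z0 z1 = cl3 a b x).
  { apply (cl3_eq_of_noncollinear abx); [apply cl3_r|exact (proj1 (L0_sub z0 L0_z0))
                                       |exact (proj1 (L1_sub z1 L1_z1))|split; auto]. }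
  assert (Ha : cl3 x z0 z1 a) by (rewrite Eplane; apply cl3_l).
  destruct (cl3_transversal (not_eq_sym Hz0x) Hz1 Ha) as [u [s [Hu [Hs Has]]]].
  rewrite E1 in Hu. rewrite E0 in Hs.
  exact (parallels_transversal_absurd Hu Hs Has).
Qed.

End TwoParallels.

Lemma parallel_in_plane_exists {L a b x} : IsLine L -> L a -> L b -> a <> b -> ~ L x ->
  exists Lam, IsLine Lam /\ Lam x /\ forall z, Lam z -> cl3 a b x z /\ ~ L z.
Proof.
  intros HL La Lb Hab Hx.
  assert (Hbx : b <> x) by (intro; subst; contradiction).
  destruct (line_third_point long b x (lineThrough_is_line Hbx)) as [y [Hy [Hyb Hyx]]].
  assert (Hx_by : LT b y x) by (rewrite (lineThrough_eq Hbx (lineThrough_l b x) Hy (not_eq_sym Hyb));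
                               apply lineThrough_r).
  assert (EL : LT a b = L) by exact (lineThrough_line HL La Lb Hab).
  assert (Hnx : ~ LT a b x) by (rewrite EL; exact Hx).
  destruct (aff a b y x Hx_by Hnx) as [u [Hu Hc]].
  assert (Hmiss := proj1 (Hc u Hu) eq_refl).
  assert (Hux : u <> x).
  { intro; subst u. assert (Hay : a <> y).
    { intro; subst y. apply Hnx. rewrite (lineThrough_eq Hbx Hy (lineThrough_l b x) Hab).
      apply lineThrough_r. }
    assert (Ea : LT b x a).
    { rewrite <- (lineThrough_eq Hbx Hy (lineThrough_r b x) Hyx),
              (lineThrough_eq Hay (lineThrough_r a y) Hu Hyx).
      apply lineThrough_l. }
    apply Hnx. rewrite (lineThrough_eq Hbx Ea (lineThrough_l b x) Hab). apply lineThrough_r. }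
  exists (LT u x). split; [apply lineThrough_is_line; exact Hux|]. split; [apply lineThrough_r|].
  intros z Hz. split.
  - refine (closure_lineThrough _ (cl3_r a b x) Hz).
    refine (closure_lineThrough (cl3_l a b x) _ Hu).
    exact (closure_lineThrough (cl3_m a b x) (cl3_r a b x) Hy).
  - intro Lz. apply Hmiss. exists z. split; [exact Hz|]. rewrite EL; exact Lz.
Qed.

Lemma playfair_of_affine : playfair IsLine.
Proof.
  intros P L x HP HL HLP Px Hx.
  destruct (line_two_points HL) as [a [b [Hab [La Lb]]]].
  assert (abx : noncollinear a b x)
    by (split; [exact Hab|]; rewrite (lineThrough_line HL La Lb Hab); exact Hx).
  rewrite (plane_eq_cl3 HP (HLP a La) (HLP b Lb) Px abx).
  split; [exact (parallel_in_plane_exists HL La Lb Hab Hx)|].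
  intros L0 L1 HL0 L0_x L0_sub HL1 L1_x L1_sub z. split.
  - exact (parallels_in_plane_sub L L1 L0 a b x HL La Lb Hab Hx HL1 L1_x L1_sub HL0 L0_x L0_sub z).
  - exact (parallels_in_plane_sub L L0 L1 a b x HL La Lb Hab Hx HL0 L0_x L0_sub HL1 L1_x L1_sub z).
Qed.

End Affine.
End Regular.

End Liner.

Theorem theorem3p7p2 (X : Type) (IsLine : (X -> Prop) -> Prop) :
  is_liner IsLine -> more_than_two X ->
  (playfair IsLine <-> (affine IsLine /\ regular3 IsLine /\ long3 IsLine)) /\
  (playfair IsLine <-> parallel_property IsLine).
Proof.
  intros liner big.
  assert (to_parallel := parallel_of_playfair _ _ liner).
  assert (from_parallel : parallel_property IsLine -> affine IsLine /\ regular3 IsLine /\ long3 IsLine).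
  { intro par. assert (long := long3_of_parallel _ _ liner par big).
    exact (conj (affine_of_parallel _ _ liner par)
                (conj (regular3_of_parallel _ _ liner par long) long)). }
  assert (to_playfair : affine IsLine /\ regular3 IsLine /\ long3 IsLine -> playfair IsLine)
    by (intros [aff [reg long]]; exact (playfair_of_affine _ _ liner reg aff long)).
  split; split; auto.
Qed.
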